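(* Let $N\ge 1$ and let $u^1,\dots,u^{N+1}$ be independent variables. Let $\sigma^0=1$ and $\sigma^r$ ($1\le r\le N$) be the elementary symmetric polynomials of $u^1,\dots,u^N$, so $\prod_{i=1}^N(p+u^i)=\sum_{i=0}^Np^i\sigma^{N-i}$, and define $$s^r=\sum_{n=0}^{r}(-1)^n\sigma^{r-n}(u^{N+1})^n,\qquad r=1,\dots,N.$$ Then for all $m,i\in\{1,\dots,N\}$, $$\frac{\partial s^m}{\partial u^i}+\frac{\partial s^m}{\partial u^{N+1}}=(u^{N+1}-u^i)\,P_{m,i},$$ where $P_{m,i}$ is a polynomial in $u^1,\dots,u^{N+1}$ of degree $m-2$ (to be read as $P_{m,i}=0$ when $m=1$).
   Context: The $s^r$ are the coefficients in the expansion $\frac{\prod_{i=1}^N(p+u^i)}{p+u^{N+1}}=\sum_{n=0}^{N-1}p^ns^{N-1-n}+\frac{s^N}{p+u^{N+1}}$ (with $s^0=1$). *)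

From HB Require Import structures.
From mathcomp Require Import all_boot all_order all_algebra.
From mathcomp Require Import mpoly.
Set Implicit Arguments. Unset Strict Implicit. Unset Printing Implicit Defensive.
Import Order.TTheory GRing.Theory Num.Theory.
Local Open Scope ring_scope.

(* Variables u^1, ..., u^(N+1) are 'X_0, ..., 'X_N of {mpoly R[N.+1]};
   u^(N+1) is 'X_(ord_max). *)

Definition sigma (R : comRingType) (N r : nat) : {mpoly R[N.+1]} :=
  \sum_(h : {set 'I_N.+1} | (#|h| == r) && (ord_max \notin h))
     \prod_(k in h) 'X_k.

Definition spoly (R : comRingType) (N r : nat) : {mpoly R[N.+1]} :=
  \sum_(0 <= n < r.+1)
     ((-1) ^+ n * sigma R N (r - n) * 'X_(@ord_max N) ^+ n).

From HB Require Import structures.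
From mathcomp Require Import all_boot all_order all_algebra.
From mathcomp Require Import mpoly ring zify.
Set Implicit Arguments. Unset Strict Implicit. Unset Printing Implicit Defensive.
Import Order.TTheory GRing.Theory Num.Theory.
Local Open Scope ring_scope.

(* Split off u^i: sigma^k = e^k + u^i e^(k-1), where e^k is the k-th elementary
   symmetric polynomial of the u^j with j <> i, N+1.  Hence d_i sigma^k = e^(k-1) and
   d_(N+1) sigma^k = 0, and a reindexing of the two resulting sums gives
   d_i s^m + d_(N+1) s^m = (u^(N+1) - u^i) P with
   P = sum_(b <= m-2) (-1)^b (b+1) (u^(N+1))^b e^(m-2-b).
   P is homogeneous of degree m-2, and at u = (0,...,0,1) it takes the value
   (-1)^m (m-1), which is nonzero in characteristic 0. *)

Definition lag {V : nmodType} (f : nat -> V) k := if k is k'.+1 then f k' else 0.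

Section SignedSumIdentity.
Context {R : comRingType} (t u : R) (e : nat -> R).

Definition signed_cofactor m :=
  \sum_(0 <= b < m.-1) (-1) ^+ b * b.+1%:R * t ^+ b * e (m - b.+2).

Lemma signed_lag_sum m :
  \sum_(0 <= n < m.+1) (-1) ^+ n * n%:R * t ^+ n.-1 * lag e (m - n)
  = - signed_cofactor m.
Proof.
rewrite /signed_cofactor; case: m => [|m].
  by rewrite big_nat1 big_geq // mulr0 oppr0.
rewrite big_nat_recl // mulr0n mulr0 !mul0r add0r.
rewrite big_nat_recr //= subnn mulr0 addr0 -sumrN.
apply: eq_big_nat => n /andP[_ ltnm].
by rewrite subSS -[(m - n)%N](@subnSK n m) //= exprS; ring.
Qed.

Lemma signed_sum_mul_cofactor m :
  \sum_(0 <= n < m.+1)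
    (-1) ^+ n * (t ^+ n * lag e (m - n) + n%:R * t ^+ n.-1 * e (m - n))
  = t * signed_cofactor m.
Proof.
rewrite /signed_cofactor; case: m => [|m].
  by rewrite big_nat1 big_geq // subnn /=; ring.
under eq_bigr do rewrite mulrDr.
rewrite big_split /= big_nat_recr //= subnn /= !mulr0 addr0.
rewrite [X in _ + X]big_nat_recl // mulr0n !mul0r mulr0 add0r -big_split /=.
rewrite big_nat_recl // !subSS !subn0 /= !expr0 expr1 mulr1n !mul1r mulN1r.
rewrite addrN add0r mulr_sumr; apply: eq_big_nat => n /andP[_ ltnm].
by rewrite !subSS -[(m - n)%N](@subnSK n m) //= !exprS; ring.
Qed.

(* Read with t = u^(N+1), u = u^i and e k = e^k, the n-th summand is the n-th
   term of d_i s^m + d_(N+1) s^m. *)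
Lemma signed_sum_factor m :
  \sum_(0 <= n < m.+1) (-1) ^+ n *
      (t ^+ n * lag e (m - n) + n%:R * t ^+ n.-1 * (e (m - n) + u * lag e (m - n)))
  = (t - u) * signed_cofactor m.
Proof.
transitivity (\sum_(0 <= n < m.+1)
    (-1) ^+ n * (t ^+ n * lag e (m - n) + n%:R * t ^+ n.-1 * e (m - n))
  + u * \sum_(0 <= n < m.+1) (-1) ^+ n * n%:R * t ^+ n.-1 * lag e (m - n)).
  by rewrite mulr_sumr -big_split; apply: eq_bigr => n _ /=; ring.
by rewrite signed_sum_mul_cofactor signed_lag_sum; ring.
Qed.

End SignedSumIdentity.

Section MPolyDerivHomog.
Variables (n : nat) (R : comRingType).
Implicit Types (p : {mpoly R[n]}) (i j : 'I_n).

Lemma mderivXU i j : mderiv i ('X_j : {mpoly R[n]}) = (j == i)%:R.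
Proof.
rewrite mderivX mnm1E; case: eqP => [->|_]; last by rewrite scale0r.
have -> : (U_(i) - U_(i) = 0)%MM by apply/mnmP => l; rewrite mnmBE mnm0E subnn.
by rewrite mpolyX0 scale1r.
Qed.

Lemma mderiv_exp i p k : mderiv i (p ^+ k) = p ^+ k.-1 *+ k * mderiv i p.
Proof.
elim: k => [|k IHk]; first by rewrite expr0 mulr0n mul0r -mpolyC1 mderivC.
rewrite exprS mderivM IHk; case: k {IHk} => [|k] /=; first by rewrite !expr0; ring.
by rewrite exprS; ring.
Qed.

Lemma msize_dhomog p d : p != 0 -> p \is d.-homog -> msize p = d.+1.
Proof.
move=> p_neq0 p_homog.
have := dhomog_uniq p_neq0 p_homog (dhomog_msize p_homog).
have : msize p != 0%N by rewrite msize_poly_eq0.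
lia.
Qed.

End MPolyDerivHomog.

Section ElementarySymmetricOnSubset.
Context {n : nat} {R : comRingType}.
Implicit Types (A h : {set 'I_n}) (i j : 'I_n).

Definition mesymOn A k : {mpoly R[n]} :=
  \sum_(h : {set 'I_n} | (h \subset A) && (#|h| == k)) \prod_(j in h) 'X_j.

Lemma mprodX_mesym1 h : \prod_(j in h) 'X_j = 'X_[mesym1 h] :> {mpoly R[n]}.
Proof.
rewrite mprodXE; congr 'X_[_]; apply/mnmP => i.
rewrite mnmE mnm_sumE big_mkcond (bigD1 i) //= mnmE eqxx big1 ?addn0 // => j ne_ji.
by case: (_ \in _); rewrite // mnmE (negbTE ne_ji).
Qed.

Lemma mesymOnD1 k {A j} : j \in A ->
  mesymOn A k = mesymOn (A :\ j) k + 'X_j * lag (mesymOn (A :\ j)) k.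
Proof.
move=> jA; rewrite /mesymOn (bigID (fun h => j \in h)) /= addrC; congr (_ + _).
  by apply: eq_bigl => h; rewrite subsetD1 andbAC.
case: k => [|k] /=.
  rewrite mulr0 big_pred0 // => h; apply/negbTE.
  by rewrite cards_eq0; apply/andP => -[/andP[_ /eqP ->]]; rewrite inE.
rewrite mulr_sumr (reindex_onto (fun h => j |: h) (fun h => h :\ j)) /=; last first.
  by move=> h /andP[_ jh]; rewrite setD1K.
apply: eq_big => h.
  case jh: (j \in h).
    rewrite subsetD1 jh andbF /=; apply/negbTE/negP => /andP[_ /eqP h_eq].
    by move: jh; rewrite -h_eq setD11.
  rewrite setU1K ?jh // eqxx andbT setU11 andbT cardsU1 jh add1n eqSS.
  by rewrite subUset sub1set jA /= subsetD1 jh andbT.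
by move=> /andP[_ /eqP h_eq]; rewrite big_setU1 //= -h_eq setD11.
Qed.

Lemma mderiv_mesymOn_notin A i k : i \notin A -> mderiv i (mesymOn A k) = 0.
Proof.
move=> iA; rewrite raddf_sum; apply: big1 => h /andP[hA _].
have ih : i \notin h by apply: contra iA; apply: (subsetP hA).
by rewrite mprodX_mesym1 /= mderivX mnmE (negbTE ih) scale0r.
Qed.

Lemma mderiv_mesymOn A i k : i \in A ->
  mderiv i (mesymOn A k) = lag (mesymOn (A :\ i)) k.
Proof.
move=> iA; have iAi : i \notin A :\ i by rewrite setD11.
have Dlag : mderiv i (lag (mesymOn (A :\ i)) k) = 0.
  by case: k => [|k] /=; rewrite ?mderiv0 ?mderiv_mesymOn_notin.
rewrite (mesymOnD1 k iA) mderivD mderivM mderivXU eqxx Dlag.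
by rewrite mderiv_mesymOn_notin // add0r mul1r mulr0 addr0.
Qed.

Lemma dhomog_mesymOn A k : mesymOn A k \is k.-homog.
Proof.
apply: rpred_sum => h /andP[_ /eqP <-].
by rewrite mprodX_mesym1 dhomogX /= mdeg_mesym1.
Qed.

Lemma meval_mesymOn (v : 'I_n -> R) A k : {in A, v =1 fun=> 0} ->
  meval v (mesymOn A k) = (k == 0)%:R.
Proof.
move=> vA0; rewrite rmorph_sum; case: k => [|k].
  rewrite (big_pred1 set0) ?rmorph_prod ?big_set0 // => h /=.
  by rewrite cards_eq0 andb_idl // => /eqP ->; rewrite sub0set.
apply: big1 => h /andP[hA]; case: (set_0Vmem h) => [-> | [j jh] _].
  by rewrite cards0.
by rewrite rmorph_prod (bigD1 j) //= mevalXU vA0 ?mul0r // (subsetP hA).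
Qed.

End ElementarySymmetricOnSubset.

Section SPolyDerivative.
Context {R : comRingType} {N : nat}.
Local Notation t := ('X_(@ord_max N) : {mpoly R[N.+1]}).

Lemma sigma_mesymOn r : sigma R N r = mesymOn [set~ ord_max] r.
Proof.
by apply: eq_bigl => h; rewrite subsetC sub1set inE andbC.
Qed.

Definition spoly_cofactor i m := signed_cofactor t (mesymOn ([set~ ord_max] :\ i)) m.

Lemma mderiv_spoly_factor i m : i != ord_max ->
  mderiv i (spoly R N m) + mderiv ord_max (spoly R N m)
  = ('X_ord_max - 'X_i) * spoly_cofactor i m.
Proof.
move=> iM; have iA : i \in [set~ ord_max] by rewrite in_setC1.
rewrite /spoly_cofactor -(signed_sum_factor _ 'X_i) /spoly !raddf_sum -big_split.
apply: eq_bigr => n _ /=.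
rewrite -!mulrA !raddfMsign -mulrDr; congr (_ * _) => /=.
rewrite !mderivM !mderiv_exp !mderivXU eqxx eq_sym (negbTE iM) sigma_mesymOn.
rewrite mderiv_mesymOn // mderiv_mesymOn_notin ?setC11 // (mesymOnD1 _ iA) /=.
ring.
Qed.

Lemma dhomog_spoly_cofactor i m : spoly_cofactor i m \is (m - 2)%N.-homog.
Proof.
rewrite /spoly_cofactor /signed_cofactor big_nat_cond.
apply: rpred_sum => b /andP[/andP[_ ltbm] _].
rewrite -!mulrA rpredMsign mulr_natl; apply: rpredMn.
have -> : (m - 2 = b + (m - b.+2))%N by lia.
apply: dhomogM; last exact: dhomog_mesymOn.
by rewrite mpolyXn dhomogX /= mdegMn mdeg1 mul1n.
Qed.

Lemma meval_spoly_cofactor i m :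
  meval (fun j => (j == ord_max)%:R) (spoly_cofactor i m.+2) = (-1) ^+ m * m.+1%:R.
Proof.
have v0 : {in [set~ ord_max] :\ i, (fun j : 'I_N.+1 => (j == ord_max)%:R : R) =1 fun=> 0}.
  by move=> j; rewrite !inE => /andP[_ /negbTE ->].
rewrite rmorph_sum big_nat_recr //= big1_seq ?add0r; last first.
  move=> b /andP[_]; rewrite mem_index_iota => /andP[_ ltbm].
  by rewrite !mevalM !subSS meval_mesymOn // subn_eq0 leqNgt ltbm mulr0.
by rewrite !mevalM subnn meval_mesymOn // rmorph_sign rmorph_nat rmorphXn /= mevalXU eqxx expr1n !mulr1.
Qed.

End SPolyDerivative.

Lemma msize_spoly_cofactor (R : numDomainType) N (i : 'I_N.+1) m : (0 < m)%N ->
  msize (spoly_cofactor i m : {mpoly R[N.+1]}) = (m - 1)%N.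
Proof.
case: m => [|[|m]] // _.
  by rewrite /spoly_cofactor /signed_cofactor big_geq ?msize0.
rewrite (msize_dhomog _ (dhomog_spoly_cofactor i m.+2)) ?subSS ?subn0 //.
apply/eqP => P0; have := meval_spoly_cofactor (R := R) i m; rewrite P0 meval0.
by move/esym/eqP; rewrite mulf_eq0 signr_eq0 pnatr_eq0.
Qed.

Theorem lemma9 (R : numDomainType) (N : nat) (hN : (1 <= N)%N)
    (m : nat) (i : 'I_N.+1) :
  (1 <= m <= N)%N -> i != ord_max ->
  exists P : {mpoly R[N.+1]},
    mderiv i (spoly R N m) + mderiv ord_max (spoly R N m)
      = ('X_ord_max - 'X_i) * P
    /\ msize P = (m - 1)%N.
Proof.
move=> /andP[m_gt0 _] iM; exists (spoly_cofactor i m); split.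
  exact: mderiv_spoly_factor.
exact: msize_spoly_cofactor.
Qed.
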